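(* Let $n\ge 8$ be an even integer and let $W_{3,n}$ be the $3$-regular Kn\''odel graph. Then $W_{3,n}$ is $\gamma$-critical if and only if $n\equiv 4 \pmod 8$.
   Context: For an even integer $n\ge 2$ and $1\le\Delta\le\lfloor\log_2 n\rfloor$, the Kn\''odel graph $W_{\Delta,n}$ is the $\Delta$-regular bipartite graph on the $n$ vertices $(i,j)$, $i\in\{1,2\}$, $0\le j\le n/2-1$, in which for every $j$ the vertex $(1,j)$ is adjacent to the vertices $(2,(j+2^k-1)\bmod (n/2))$ for $k=0,1,\dots,\Delta-1$ (and there are no other edges); in particular $W_{3,n}$ is defined for even $n\ge 8$. A set $D$ of vertices of a graph $G$ is dominating if every vertex not in $D$ is adjacent to a vertex of $D$; $\gamma(G)$ is the minimum size of a dominating set. A graph $G$ is $\gamma$-critical (domination vertex critical) if $\gamma(G-u)<\gamma(G)$ for every vertex $u$ of $G$, where $G-u$ is the graph obtained by deleting $u$. *)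

From mathcomp Require Import all_boot.
Set Implicit Arguments. Unset Strict Implicit. Unset Printing Implicit Defensive.

Definition dominating_on (T : finType) (adj : rel T) (V D : {set T}) : bool :=
  (D \subset V) && [forall v in V :\: D, [exists d in D, adj v d]].

(* Domination number of the graph induced on V (V itself is dominating,
   so the minimum is over a nonempty family; #|T| is just a neutral bound). *)
Definition gamma_on (T : finType) (adj : rel T) (V : {set T}) : nat :=
  \big[minn/#|T|]_(D : {set T} | dominating_on adj V D) #|D|.

Definition gamma (T : finType) (adj : rel T) : nat := gamma_on adj [set: T].

Definition gamma_del (T : finType) (adj : rel T) (u : T) : nat :=
  gamma_on adj [set~ u].

Definition gamma_critical (T : finType) (adj : rel T) : Prop :=
  forall u : T, gamma_del adj u < gamma adj.

(* Knödel graph W_{Δ,n}: vertices (i,j), i ∈ {1,2} (encoded false = 1,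
   true = 2), j ∈ 'I_(n/2).  (1,j) ~ (2,(j + 2^k - 1) mod (n/2)) for k < Δ. *)
Definition knodel_vertex (n : nat) : finType := (bool * 'I_(n./2))%type.

Definition knodel_arc (Delta n : nat) (j j' : nat) : bool :=
  [exists k : 'I_Delta, j' == (j + 2 ^ k - 1) %% n./2].

Definition knodel_adj (Delta n : nat) : rel (knodel_vertex n) :=
  fun x y =>
    match x, y with
    | (false, j), (true, j') => knodel_arc Delta n j j'
    | (true, j'), (false, j) => knodel_arc Delta n j j'
    | _, _ => false
    end.
Arguments knodel_adj Delta n : clear implicits.

From mathcomp Require Import all_boot zify.
Set Implicit Arguments. Unset Strict Implicit. Unset Printing Implicit Defensive.

(* Every vertex of W_{3,n} has at most three neighbours, all on the other side.
   Hence a set with a vertices on side 1 and b on side 2 dominates at most a + 3b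
   vertices of side 1 and b + 3a of side 2: this gives 4 γ(W - u) >= n - 1, and
   γ(W) >= 2t + 2 when n/2 = 4t + 2.  Conversely, the vertices (1,4i) and (2,4i+2),
   i < t, patched near the wrap-around, form a dominating set of W of size at most
   (n + 2)/4 when n/2 is not 2 mod 4, which leaves no room for γ(W - u) < γ(W); when
   n/2 = 4t + 2 they form a dominating set of W - u of size 2t + 1 for one u on each
   side, and the rotations j |-> j + k are automorphisms carrying u to any vertex of
   its side. *)

Lemma card_bigcup_le (T I : finType) (A : {pred I}) (F : I -> {set T}) :
  #|\bigcup_(i in A) F i| <= \sum_(i in A) #|F i|.
Proof.
apply: (big_ind2 (fun (X : {set T}) k => #|X| <= k)); first by rewrite cards0.
  by move=> X1 k1 X2 k2 h1 h2; exact: leq_trans (leq_card_setU _ _) (leq_add h1 h2).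
by [].
Qed.

Lemma card_le_seq (T : finType) (U : eqType) (g : T -> U) (A : {set T}) (s : seq U) :
  injective g -> {in A, forall x, g x \in s} -> #|A| <= size s.
Proof.
move=> g_inj As; rewrite cardE -(size_map g); apply: uniq_leq_size.
  by rewrite (map_inj_uniq g_inj) enum_uniq.
by move=> y /mapP[x]; rewrite mem_enum => /As gx ->.
Qed.

Lemma imset_setC1 (T : finType) (f : T -> T) (u : T) :
  injective f -> f @: [set~ u] = [set~ f u].
Proof.
move=> f_inj; apply/eqP; rewrite eqEcard card_imset // !cardsC1 leqnn andbT.
by apply/subsetP => y /imsetP[v vu ->]; rewrite in_setC1 (inj_eq f_inj) -in_setC1.
Qed.

Section Domination.

Variables (T : finType) (adj : rel T).
Implicit Types (u : T) (V D : {set T}).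

Lemma dominating_on_refl V : dominating_on adj V V.
Proof. by rewrite /dominating_on subxx; apply/forall_inP => v; rewrite setDv inE. Qed.

Lemma gamma_on_le V D : dominating_on adj V D -> gamma_on adj V <= #|D|.
Proof.
move=> domD; rewrite /gamma_on; have := mem_index_enum D.
elim: (index_enum _) => [|x r IH] //=; rewrite big_cons inE.
case/orP => [/eqP <-|/IH le_r]; first by rewrite domD geq_minl.
by case: ifP => _ //; exact: leq_trans (geq_minr _ _) le_r.
Qed.

Lemma gamma_on_attained V : exists2 D, dominating_on adj V D & #|D| = gamma_on adj V.
Proof.
pose attained k := exists2 D, dominating_on adj V D & #|D| = k.
have [gT|//] : gamma_on adj V = #|T| \/ attained (gamma_on adj V).
  apply: (big_ind (fun k => k = #|T| \/ attained k)) => [|x y hx hy|D domD]; first by left.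
  - by case/orP: (leq_total x y) => [/minn_idPl|/minn_idPr] ->.
  - by right; exists D.
exists V; first exact: dominating_on_refl.
by apply/eqP; rewrite eqn_leq gamma_on_le ?dominating_on_refl // gT max_card.
Qed.

Lemma dominating_on_imset (f : T -> T) V D :
  {homo f : x y / adj x y} -> dominating_on adj V D -> dominating_on adj (f @: V) (f @: D).
Proof.
move=> f_adj /andP[DV /forall_inP domV]; rewrite /dominating_on imsetS //=.
apply/forall_inP => _ /setDP[/imsetP[v Vv ->] fvD].
have /domV/existsP[d /andP[Dd vd]] : v \in V :\: D.
  by rewrite inE Vv andbT; apply: contra fvD; exact: imset_f.
by apply/existsP; exists (f d); rewrite imset_f ?f_adj.
Qed.

Lemma gamma_del_imset (f : T -> T) u D :
  injective f -> {homo f : x y / adj x y} ->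
  dominating_on adj [set~ u] D -> gamma_del adj (f u) <= #|D|.
Proof.
move=> f_inj f_adj /(dominating_on_imset f_adj); rewrite imset_setC1 // => domfD.
exact: leq_trans (gamma_on_le domfD) (leq_imset_card _ _).
Qed.

Lemma dominated_card_le k V D (A B : {set T}) :
  (forall y, #|[set x | adj x y]| <= k) ->
  (forall x y, x \in A -> adj x y -> y \in B) ->
  dominating_on adj V D -> #|V :&: A| <= #|D :&: A| + k * #|D :&: B|.
Proof.
move=> deg AB /andP[_ /forall_inP domV].
have cover : V :&: A \subset (D :&: A) :|: \bigcup_(d in D :&: B) [set x | adj x d].
  apply/subsetP => x /setIP[Vx Ax]; rewrite inE.
  case Dx: (x \in D); first by rewrite inE Dx Ax.
  have /existsP[d /andP[Dd xd]] : [exists d in D, adj x d] by rewrite domV // inE Dx Vx.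
  by apply/orP; right; apply/bigcupP; exists d; rewrite !inE ?Dd ?(AB x d).
apply: leq_trans (subset_leq_card cover) _.
apply: leq_trans (leq_card_setU _ _) _; rewrite leq_add2l.
apply: leq_trans (card_bigcup_le _ _) _.
by rewrite mulnC -sum_nat_const; apply: leq_sum => d _; exact: deg.
Qed.

End Domination.

(* (j + c) mod m and (j - c) mod m for j < m and c <= m, written without %% so that
   lia can reason about them. *)
Definition cyc_add (m j c : nat) : nat := if j + c < m then j + c else j + c - m.
Definition cyc_sub (m j c : nat) : nat := if c <= j then j - c else j + m - c.

Section CyclicShift.

Variables m j c : nat.
Hypotheses (lt_jm : j < m) (le_cm : c <= m).

Lemma cyc_add_lt : cyc_add m j c < m.
Proof. by rewrite /cyc_add; case: ifP; lia. Qed.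

Lemma cyc_sub_lt : cyc_sub m j c < m.
Proof. by rewrite /cyc_sub; case: ifP; lia. Qed.

Lemma cyc_addE : (j + c) %% m = cyc_add m j c.
Proof.
rewrite /cyc_add; case: ifP => [|ge_jcm]; first exact: modn_small.
have le_mjc : m <= j + c by rewrite leqNgt ge_jcm.
by rewrite -[in LHS](subnK le_mjc) modnDr modn_small; lia.
Qed.

Lemma cyc_subK : (cyc_sub m j c + c) %% m = j.
Proof.
rewrite /cyc_sub; case: ifP => [le_cj|_]; first by rewrite subnK // modn_small.
by rewrite subnK ?modnDr ?modn_small //; lia.
Qed.

Lemma cyc_sub_addE : cyc_sub m ((j + c) %% m) c = j.
Proof. by rewrite cyc_addE /cyc_sub /cyc_add; do 2!case: ifP; lia. Qed.

End CyclicShift.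

Section KnodelRotation.

Variables (Delta n : nat).

Definition knodel_rot (k : nat) (x : knodel_vertex n) : knodel_vertex n :=
  (x.1, Ordinal (ltn_pmod (val x.2 + k) (leq_ltn_trans (leq0n _) (ltn_ord x.2)))).

Lemma knodel_rot_inj k : injective (knodel_rot k).
Proof.
move=> [b j] [b' j'] [-> /eqP]; rewrite eqn_modDr !modn_small // => /eqP j_eq.
by congr pair; apply: val_inj.
Qed.

Lemma knodel_rot_adj k : {homo knodel_rot k : x y / knodel_adj Delta n x y}.
Proof.
have rot_arc j j' : knodel_arc Delta n j j' ->
    knodel_arc Delta n ((j + k) %% n./2) ((j' + k) %% n./2).
  case/existsP=> i /eqP ->; apply/existsP; exists i.
  by rewrite -!addnBA ?expn_gt0 // !modnDml addnAC.
by move=> [[] j] [[] j'] //=; exact: rot_arc.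
Qed.

End KnodelRotation.

(* The vertices (1,4i) and (2,4i+2) for i < t, plus the indices e1 on side 1 and e2
   on side 2 (side 1 is encoded by false).  (1,4i) dominates (2,4i), (2,4i+1) and
   (2,4i+3); (2,4i+2) dominates (1,4i+2), (1,4i+1) and (1,4i-1); e1 and e2 repair
   the indices >= 4t and the wrap-around. *)
Definition knodel3_pattern (t : nat) (e1 e2 : seq nat) (b : bool) (j : nat) : bool :=
  (j < 4 * t) && (j %% 4 == if b then 2 else 0) || (j \in if b then e2 else e1).

Local Ltac pattern_arith :=
  rewrite /knodel3_pattern /cyc_add /cyc_sub /= ?inE; repeat case: ifP; lia.

Section Knodel3.

Variable n : nat.
Local Notation m := n./2.
Local Notation W := (knodel_adj 3 n).
Hypothesis m_ge3 : 3 <= m.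

Lemma knodel_arc3E j j' :
  knodel_arc 3 n j j' = [|| j' == j %% m, j' == (j + 1) %% m | j' == (j + 3) %% m].
Proof.
rewrite /knodel_arc; apply/existsP/idP => [[k]|].
  rewrite -addnBA ?expn_gt0 //.
  by case: k => [[|[|[|k]]] //= _]; rewrite ?addn0 => ->; rewrite ?orbT.
case/or3P => /eqP ->.
- by exists (Ordinal (isT : 0 < 3)); rewrite /= expn0 addnK.
- by exists (Ordinal (isT : 1 < 3)); rewrite -addnBA.
- by exists (Ordinal (isT : 2 < 3)); rewrite -addnBA.
Qed.

Lemma knodel_adj_side x y : W x y -> x.1 != y.1.
Proof. by case: x y => [[] ?] [[] ?]. Qed.

Lemma knodel_vertex_val_inj : injective (fun x : knodel_vertex n => (x.1, val x.2)).
Proof. by move=> [b j] [b' j'] [-> /val_inj ->]. Qed.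

Lemma knodel3_shift_le c : c \in [:: 0; 1; 3] -> c <= m.
Proof. by rewrite !inE => /or3P[] /eqP ->; lia. Qed.

Lemma knodel3_adj_add (j j' : 'I_m) c :
  c \in [:: 0; 1; 3] -> val j' = cyc_add m j c -> W (false, j) (true, j').
Proof.
move=> c013 j'E; rewrite /= knodel_arc3E j'E -cyc_addE ?ltn_ord ?knodel3_shift_le //.
by move: c013; rewrite !inE => /or3P[] /eqP ->; rewrite ?addn0 eqxx ?orbT.
Qed.

Lemma knodel3_adj_sub (j j' : 'I_m) c :
  c \in [:: 0; 1; 3] -> val j' = cyc_sub m j c -> W (true, j) (false, j').
Proof.
move=> c013 j'E; rewrite /= knodel_arc3E j'E.
have := cyc_subK (ltn_ord j) (knodel3_shift_le c013).
by move: c013; rewrite !inE => /or3P[] /eqP ->; rewrite ?addn0 => ->; rewrite eqxx ?orbT.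
Qed.

Lemma knodel3_degree y : #|[set x | W x y]| <= 3.
Proof.
case: y => [[] j'].
- apply: (card_le_seq (s := [:: (false, cyc_sub m j' 0); (false, cyc_sub m j' 1);
    (false, cyc_sub m j' 3)]) knodel_vertex_val_inj).
  move=> [[] j]; rewrite inE //= knodel_arc3E => /or3P[] /eqP ->; rewrite !inE.
  + by rewrite {1}/cyc_sub leq0n subn0 modn_small ?eqxx.
  + by rewrite cyc_sub_addE ?ltn_ord ?eqxx ?orbT //; lia.
  + by rewrite cyc_sub_addE ?ltn_ord ?eqxx ?orbT.
- apply: (card_le_seq (s := [:: (true, j' %% m); (true, (j' + 1) %% m);
    (true, (j' + 3) %% m)]) knodel_vertex_val_inj).
  by move=> [[] j]; rewrite inE //= knodel_arc3E => /or3P[] /eqP ->; rewrite !inE eqxx ?orbT.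
Qed.

Local Notation side b := [set x : knodel_vertex n | x.1 == b].

Lemma card_knodel_vertex : #|knodel_vertex n| = 2 * m.
Proof. by rewrite card_prod card_bool card_ord. Qed.

Lemma card_knodel_side b : #|side b| = m.
Proof.
have -> : side b = setX [set b] [set: 'I_m] :> {set knodel_vertex n}.
  by apply/setP => x; rewrite !inE andbT.
by rewrite cardsX cards1 cardsT card_ord mul1n.
Qed.

Lemma card_knodel_sides (A : {set knodel_vertex n}) :
  #|A| = #|A :&: side false| + #|A :&: side true|.
Proof.
rewrite -(cardsID (side false) A); have -> // : A :\: side false = A :&: side true.
by apply/setP => -[[] j]; rewrite !inE ?andbT ?andbF.
Qed.

Lemma knodel3_gamma_del_ge u : 2 * m <= (4 * gamma_del W u).+1.
Proof.
rewrite /gamma_del; have [D domD <-] := gamma_on_attained W [set~ u].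
have := dominated_card_le (A := setT) (B := setT) knodel3_degree _ domD.
rewrite !setIT cardsC1 card_knodel_vertex => /(_ (fun _ _ _ _ => in_setT _)).
lia.
Qed.

Lemma knodel3_gamma_ge t : m = 4 * t + 2 -> 2 * t + 2 <= gamma W.
Proof.
rewrite /gamma => m_eq; have [D domD <-] := gamma_on_attained W setT.
have adj_sideC b x y : x \in side b -> W x y -> y \in side (~~ b).
  by rewrite !inE => /eqP <- /knodel_adj_side; case: x.1; case: y.1.
have side_bound b := dominated_card_le knodel3_degree (adj_sideC b) domD.
have := side_bound false; have := side_bound true; have := card_knodel_sides D.
rewrite !setTI !card_knodel_side /=; lia.
Qed.

Local Notation pattern_set t e1 e2 :=
  [set x : knodel_vertex n | knodel3_pattern t e1 e2 x.1 (val x.2)].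

Lemma card_pattern_set t e1 e2 : #|pattern_set t e1 e2| <= 2 * t + size e1 + size e2.
Proof.
pose s := [seq (false, 4 * i) | i <- iota 0 t] ++ [seq (true, 4 * i + 2) | i <- iota 0 t]
  ++ [seq (false, j) | j <- e1] ++ [seq (true, j) | j <- e2].
apply: leq_trans (card_le_seq (s := s) knodel_vertex_val_inj _) _; last first.
  by rewrite !size_cat !size_map size_iota; lia.
move=> [b [j lt_jm]]; rewrite inE /knodel3_pattern /= !mem_cat.
case/orP => [/andP[lt_j4t /eqP]|]; case: b => /= hb.
- apply/orP; right; apply/orP; left; apply/mapP; exists (j %/ 4); last by congr pair; lia.
  by rewrite mem_iota; lia.
- apply/orP; left; apply/mapP; exists (j %/ 4); last by congr pair; lia.
  by rewrite mem_iota; lia.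
- by rewrite (map_f (fun j => (true, j))) ?orbT.
- by rewrite (map_f (fun j => (false, j))) ?orbT.
Qed.

Lemma knodel3_dominating_pred (P : bool -> nat -> bool) (V : {set knodel_vertex n}) :
  (forall x : knodel_vertex n, P x.1 (val x.2) -> x \in V) ->
  (forall j : 'I_m, (false, j) \in V ->
     P false j || has (fun c => P true (cyc_add m j c)) [:: 0; 1; 3]) ->
  (forall j : 'I_m, (true, j) \in V ->
     P true j || has (fun c => P false (cyc_sub m j c)) [:: 0; 1; 3]) ->
  dominating_on W V [set x | P x.1 (val x.2)].
Proof.
move=> PV dom1 dom2; apply/andP; split.
  by apply/subsetP => x; rewrite inE; exact: PV.
apply/forall_inP => -[[] j] /setDP[Vx]; rewrite inE /= => /negbTE nPx.
- move: (dom2 j Vx); rewrite nPx => /hasP[c c013 Pc].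
  apply/existsP; exists (false, Ordinal (cyc_sub_lt (ltn_ord j) (knodel3_shift_le c013))).
  by apply/andP; split; [rewrite inE | apply: (knodel3_adj_sub c013)].
- move: (dom1 j Vx); rewrite nPx => /hasP[c c013 Pc].
  apply/existsP; exists (true, Ordinal (cyc_add_lt (ltn_ord j) (knodel3_shift_le c013))).
  by apply/andP; split; [rewrite inE | apply: (knodel3_adj_add c013)].
Qed.

Lemma knodel3_small_dominating t r : m = 4 * t + r -> r < 4 -> r != 2 ->
  exists2 D, dominating_on W [set: knodel_vertex n] D & 4 * #|D| <= 2 * m + 2.
Proof.
case: r => [|[|[|[|r]]]] // m_eq _ _.
- exists (pattern_set t [::] [::]).
    apply: knodel3_dominating_pred => [x|j|j] _; rewrite ?in_setT //;
      have := ltn_ord j; pattern_arith.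
  by have := card_pattern_set t [::] [::]; rewrite /=; lia.
- exists (pattern_set t [::] [:: 4 * t]).
    apply: knodel3_dominating_pred => [x|j|j] _; rewrite ?in_setT //;
      have := ltn_ord j; pattern_arith.
  by have := card_pattern_set t [::] [:: 4 * t]; rewrite /=; lia.
- exists (pattern_set t [:: 4 * t + 1] [:: 4 * t]).
    apply: knodel3_dominating_pred => [x|j|j] _; rewrite ?in_setT //;
      have := ltn_ord j; pattern_arith.
  by have := card_pattern_set t [:: 4 * t + 1] [:: 4 * t]; rewrite /=; lia.
Qed.

Lemma knodel_in_setC1 b b' (i i' : 'I_m) :
  ((b, i) \in [set~ ((b', i') : knodel_vertex n)]) = (b != b') || (val i != val i').
Proof. by rewrite in_setC1 xpair_eqE negb_and. Qed.

Lemma knodel3_gamma_del_rot u k D :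
  dominating_on W [set~ u] D -> gamma_del W (knodel_rot k u) <= #|D|.
Proof. exact: gamma_del_imset (@knodel_rot_inj n k) (knodel_rot_adj _). Qed.

Lemma knodel3_gamma_del_le t u : m = 4 * t + 2 -> gamma_del W u <= 2 * t + 1.
Proof.
move=> m_eq; case: u => [[] j].
- have lt_u0 : 4 * t + 1 < m by lia.
  have dom_u0 : dominating_on W [set~ (true, Ordinal lt_u0)] (pattern_set t [::] [:: 4 * t]).
    by apply: knodel3_dominating_pred => [[[] i]|i|i]; rewrite knodel_in_setC1 /=;
      have := ltn_ord i; pattern_arith.
  have rotE : knodel_rot (j + 1) (true, Ordinal lt_u0) = (true, j).
    congr pair; apply: val_inj => /=.
    by rewrite (_ : 4 * t + 1 + (j + 1) = j + m) ?modnDr ?modn_small //; lia.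
  rewrite -rotE; apply: leq_trans (knodel3_gamma_del_rot _ dom_u0) _.
  by have := card_pattern_set t [::] [:: 4 * t]; rewrite /=; lia.
- have lt_u0 : 4 * t - 1 < m by lia.
  have dom_u0 : dominating_on W [set~ (false, Ordinal lt_u0)] (pattern_set t [:: 4 * t] [::]).
    by apply: knodel3_dominating_pred => [[[] i]|i|i]; rewrite knodel_in_setC1 /=;
      have := ltn_ord i; pattern_arith.
  have rotE : knodel_rot (j + 3) (false, Ordinal lt_u0) = (false, j).
    congr pair; apply: val_inj => /=.
    by rewrite (_ : 4 * t - 1 + (j + 3) = j + m) ?modnDr ?modn_small //; lia.
  rewrite -rotE; apply: leq_trans (knodel3_gamma_del_rot _ dom_u0) _.
  by have := card_pattern_set t [:: 4 * t] [::]; rewrite /=; lia.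
Qed.

End Knodel3.

Theorem theorem3p1 (n : nat) :
  ~~ odd n -> 8 <= n ->
  (gamma_critical (knodel_adj 3 n) <-> n = 4 %[mod 8]).
Proof.
move=> n_even n_ge8.
have n_half : n = 2 * n./2 by rewrite -[LHS]odd_double_half (negbTE n_even) mul2n.
have m_ge3 : 3 <= n./2 by lia.
have [t [r [m_eq r_lt4]]] : exists t r, n./2 = 4 * t + r /\ r < 4.
  by exists (n./2 %/ 4), (n./2 %% 4); lia.
have -> : (n = 4 %[mod 8]) <-> r = 2 by lia.
split=> [critical | r_eq u].
- apply/eqP; apply: contraT => r_ne2.
  have [D domD card_D] := knodel3_small_dominating m_ge3 m_eq r_lt4 r_ne2.
  have u : knodel_vertex n := (false, Ordinal (leq_trans (isT : 0 < 3) m_ge3)).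
  have := critical u; have := knodel3_gamma_del_ge m_ge3 u; have := gamma_on_le domD.
  rewrite /gamma; lia.
- rewrite r_eq in m_eq.
  have := knodel3_gamma_del_le m_ge3 u m_eq; have := knodel3_gamma_ge m_ge3 m_eq; lia.
Qed.
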